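(* Let $C\le\mathbb{F}^n$ be an $\mathbb{F}$-linear $[n,k,d]$-code with ordered basis $B=(a_1,\dots,a_k)$, and let ${\sf Basis}(B)$ and ${\sf Code}(B)$ be as defined in the context. (a) ${\sf Basis}(B)$ is an ordered basis of ${\sf Code}(B)$. Moreover, ${\sf Code}(B)$ is an $\mathbb{F}$-linear $[n',k',d']$-code with $n'=(k+1)n$, $k'=k+1$ and $d'\ge kd$. (b) Suppose that $C$ is $u$-bounded relative to $B$ for some positive integer $u$. Then $d'=(k+1)d$. Furthermore, ${\sf Code}(B)$ is $ku$-bounded relative to ${\sf Basis}(B)$ if and only if $u\ge d(1+2k^{-1})$.
   Context: $\mathbb{F}$ is an arbitrary field and vectors in $\mathbb{F}^n$ are column vectors. The weight $\mathrm{wt}(x)$ of $x\in\mathbb{F}^n$ is its number of nonzero coordinates. An $[n,k,d]$-code is a $k$-dimensional subspace of $\mathbb{F}^n$ whose minimum distance (the minimum weight of a nonzero codeword) is $d$. Boundedness: let $u$ be a positive integer and let $C$ be an $[n,k,d]$-code with ordered basis $B=(a_1,\dots,a_k)$. Then $C$ is $u$-bounded relative to $B$ if all three of the following hold: (i) $\mathrm{wt}(a_j)=u$ for every $j$; (ii) $\mathrm{wt}\big(\sum_{j=1}^k a_j\big)=d$; (iii) $u\ge d(1+k^{-1})$. Construction: for an ordered basis $B=(a_1,\dots,a_k)$ of a code $C\le\mathbb{F}^n$, set $a_0:=0\in\mathbb{F}^n$. For $m=1,\dots,k+1$, let $a'_m\in\mathbb{F}^{n(k+1)}$ be the column vector made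 of $k+1$ blocks of length $n$. Its $r$-th block, for $r=1,\dots,k+1$, is $a_{r-m}$, where the subscript is read modulo $k+1$ with representatives in $\{0,\dots,k\}$. Thus $a'_1=(0,a_1,\dots,a_k)^T$, $a'_2=(a_k,0,a_1,\dots,a_{k-1})^T$, …, $a'_{k+1}=(a_1,\dots,a_k,0)^T$ in block form. Define ${\sf Basis}(B)=(a'_1,\dots,a'_{k+1})$, and let ${\sf Code}(B)\le\mathbb{F}^{n(k+1)}$ be its $\mathbb{F}$-linear span. *)

From HB Require Import structures.
From mathcomp Require Import all_boot all_order all_algebra.
Set Implicit Arguments. Unset Strict Implicit. Unset Printing Implicit Defensive.
Import Order.TTheory GRing.Theory Num.Theory.
Local Open Scope ring_scope.

Section Codes.
Variable F : fieldType.

Definition wt (n : nat) (x : 'cV[F]_n) : nat := #|[set i : 'I_n | x i 0 != 0]|.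

Definition is_min_dist (n : nat) (C : {vspace 'cV[F]_n}) (d : nat) : Prop :=
  (exists2 x, x \in C & (x != 0) /\ wt x = d) /\
  (forall x, x \in C -> x != 0 -> (d <= wt x)%N).

Definition is_code (n : nat) (C : {vspace 'cV[F]_n}) (k d : nat) : Prop :=
  \dim C = k /\ is_min_dist C d.

Definition u_bounded (n k : nat) (C : {vspace 'cV[F]_n}) (B : k.-tuple 'cV[F]_n)
    (u : nat) : Prop :=
  [/\ (0 < u)%N, basis_of C B &
    exists d, [/\ is_min_dist C d,
      forall j : 'I_k, wt (tnth B j) = u,
      wt (\sum_(j < k) tnth B j) = d &
      (d%:R * (1 + (k%:R)^-1) <= (u%:R : rat))]].

(* a_j for j = 0..k, with a_0 = 0 and a_j = j-th basis vector (1-based). *)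
Definition blk (n k : nat) (B : k.-tuple 'cV[F]_n) (j : nat) : 'cV[F]_n :=
  if j is j'.+1 then nth 0 B j' else 0.

(* a'_m (0-based m' = m - 1): block r (0-based r' = r - 1) is
   a_{(r - m) mod (k+1)} = a_{(r' + (k+1) - m') mod (k+1)}.
   Blocks are laid out consecutively via mxvec (row-major order). *)
Definition basis_vec (n k : nat) (B : k.-tuple 'cV[F]_n) (m : 'I_k.+1)
    : 'cV[F]_(k.+1 * n) :=
  (mxvec (\matrix_(r < k.+1, p < n) blk B ((r + k.+1 - m) %% k.+1)%N p 0))^T.

Definition Basis (n k : nat) (B : k.-tuple 'cV[F]_n) : k.+1.-tuple 'cV[F]_(k.+1 * n) :=
  [tuple basis_vec B m | m < k.+1].

Definition Code (n k : nat) (B : k.-tuple 'cV[F]_n) : {vspace 'cV[F]_(k.+1 * n)} :=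
  <<Basis B>>%VS.

End Codes.

From HB Require Import structures.
From mathcomp Require Import all_boot all_order all_algebra.
From mathcomp Require Import zify ring.
From Stdlib Require Import Classical Wf_nat.
Import Order.TTheory GRing.Theory Num.Theory.
Set Implicit Arguments. Unset Strict Implicit. Unset Printing Implicit Defensive.
Local Open Scope ring_scope.

(* Block r of sum_m c_m a'_m is sum_m c_m a_(r-m), a combination of the a_j that does not
   involve c_r; since the a_j are free, a nonzero codeword has at most one zero block and every
   other block is a nonzero word of C.  This gives weight >= k d, and if some block vanishes the
   codeword is a multiple of a single a'_r, whose weight is the sum of the weights of the a_j.
   Under u-boundedness that sum is k u >= (k+1) d, and the codeword sum_m a'_m, all of whose
   blocks equal sum_j a_j, attains (k+1) d. *)

(* Identify the block index set with Z/(k+1), so that block r of a'_m is a_(r - m). *)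
Lemma ord_subE p (r m : 'I_p.+1) : nat_of_ord (r - m) = ((r + p.+1 - m) %% p.+1)%N.
Proof. by rewrite /= /Zp_opp /= modnDmr addnBA // ltnW. Qed.

Lemma ler_natMinvD (R : numFieldType) (d u k b : nat) : (0 < k)%N ->
  (d%:R * (1 + b%:R * (k%:R)^-1) <= u%:R :> R) = (d * (k + b) <= u * k)%N.
Proof.
move=> k_gt0; have k_neq0 : k%:R != 0 :> R by rewrite pnatr_eq0 -lt0n.
have -> : d%:R * (1 + b%:R * (k%:R)^-1) = (d * (k + b))%:R / k%:R :> R.
  by rewrite natrM natrD; field.
by rewrite ler_pdivrMr ?ltr0n // -natrM ler_nat.
Qed.

Lemma ler_natMinv (R : numFieldType) (d u k : nat) : (0 < k)%N ->
  (d%:R * (1 + (k%:R)^-1) <= u%:R :> R) = (d * (k + 1) <= u * k)%N.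
Proof. by move=> k_gt0; rewrite -(ler_natMinvD R _ _ 1 k_gt0) mulr1n mul1r. Qed.

Lemma ler_natMinvS (R : numFieldType) (d u k : nat) : (0 < k)%N ->
  ((k.+1 * d)%:R * (1 + (k.+1%:R)^-1) <= (k * u)%:R :> R) = (d * (k + 2) <= u * k)%N.
Proof.
move=> k_gt0; rewrite ler_natMinv // -[RHS](leq_pmul2r (ltn0Sn k)).
by congr (_ <= _)%N; nia.
Qed.

Section Weight.
Variable F : fieldType.

Lemma wtE n (x : 'cV[F]_n) : wt x = (\sum_i (x i 0%R != 0%R))%N.
Proof. by rewrite /wt -sum1_card big_mkcond; apply: eq_bigr => i _; rewrite inE. Qed.

Lemma wt0 n : wt (0 : 'cV[F]_n) = 0%N.
Proof. by rewrite wtE big1 // => i _; rewrite mxE eqxx. Qed.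

Lemma wtZ n (c : F) (x : 'cV[F]_n) : c != 0 -> wt (c *: x) = wt x.
Proof.
by move=> c_neq0; rewrite !wtE; apply: eq_bigr => i _; rewrite mxE mulf_eq0 (negbTE c_neq0).
Qed.

Definition col_blocks m n (f : 'I_m -> 'cV[F]_n) : 'cV[F]_(m * n) :=
  (mxvec (\matrix_(r, q) f r q 0))^T.

Lemma wt_col_blocks m n (f : 'I_m -> 'cV[F]_n) : wt (col_blocks f) = (\sum_r wt (f r))%N.
Proof.
rewrite wtE (reindex _ (@curry_mxvec_bij m n)) /=.
under [RHS]eq_bigr do rewrite wtE.
by rewrite pair_big /=; apply: eq_bigr => -[r q] _; rewrite !mxE mxvecE mxE.
Qed.

Lemma col_blocks_comb (I : finType) m n (c : I -> F) (f : I -> 'I_m -> 'cV[F]_n) :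
  \sum_(i : I) c i *: col_blocks (f i) = col_blocks (fun r => \sum_(i : I) c i *: f i r).
Proof.
apply/matrixP => ij j; rewrite (ord1 j); case/mxvec_indexP: ij => r q.
by rewrite summxE !mxE mxvecE mxE summxE; apply: eq_bigr => i _; rewrite !mxE mxvecE mxE.
Qed.

Lemma col_blocks_eq0 m n (f : 'I_m -> 'cV[F]_n) r : col_blocks f = 0 -> f r = 0.
Proof.
move/eqP; rewrite trmx_eq0 mxvec_eq0 => /eqP/matrixP f0.
by apply/matrixP => q j; move: (f0 r q); rewrite (ord1 j) !mxE.
Qed.

Lemma min_dist_unique n (C : {vspace 'cV[F]_n}) d d' :
  is_min_dist C d -> is_min_dist C d' -> d = d'.
Proof.
move=> [[x xC [x_neq0 <-]] minC] [[y yC [y_neq0 <-]] minC'].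
by apply/anti_leq; rewrite minC // minC'.
Qed.

Lemma min_dist_dim_gt0 n (C : {vspace 'cV[F]_n}) d : is_min_dist C d -> (0 < \dim C)%N.
Proof.
case=> -[x xC [x_neq0 _]] _; rewrite lt0n dimv_eq0.
by apply: contraNneq x_neq0 => C0; rewrite -memv0 -C0.
Qed.

Lemma min_dist_exists n (C : {vspace 'cV[F]_n}) : (0 < \dim C)%N -> exists d, is_min_dist C d.
Proof.
rewrite lt0n dimv_eq0 => C_neq0.
pose P w := exists2 x, x \in C & x != 0 /\ wt x = w.
have P_ex : exists w, P w by exists (wt (vpick C)), (vpick C); rewrite ?memv_pick ?vpick0.
have [d [[Pd minP] _]] :=
  @dec_inh_nat_subset_has_unique_least_element P (fun w => classic (P w)) P_ex.
exists d; split=> // x xC x_neq0.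
by apply/ssrnat.leP/minP; exists x.
Qed.

End Weight.

Section Code.
Variables (F : fieldType) (n k : nat) (B : k.-tuple 'cV[F]_n).
Hypothesis freeB : free B.

Lemma blk_ord0 : blk B (@ord0 k) = 0.
Proof. by []. Qed.

Lemma blk_lift (j : 'I_k) : blk B (lift ord0 j) = tnth B j.
Proof. by rewrite lift0 /= (tnth_nth 0). Qed.

Lemma basis_vecE m : basis_vec B m = col_blocks (fun r => blk B (r - m)%R).
Proof.
by rewrite /basis_vec /col_blocks; congr (mxvec _)^T; apply/matrixP => r q; rewrite !mxE ord_subE.
Qed.

Lemma nth_Basis (m : 'I_k.+1) : (Basis B)`_m = basis_vec B m.
Proof. by rewrite -tnth_nth tnth_mktuple. Qed.

Definition Code_block (c : 'I_k.+1 -> F) (r : 'I_k.+1) : 'cV[F]_n :=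
  \sum_m c m *: blk B (r - m)%R.

Lemma Code_combE c : \sum_m c m *: basis_vec B m = col_blocks (Code_block c).
Proof. by under eq_bigr do rewrite basis_vecE; rewrite col_blocks_comb. Qed.

Lemma Code_blockE c r : Code_block c r = \sum_(j < k) c (r - lift ord0 j) *: tnth B j.
Proof.
have sub_inj : injective (fun t : 'I_k.+1 => r - t) by move=> s t /addrI/oppr_inj.
rewrite /Code_block (reindex_inj sub_inj); under eq_bigr do rewrite subKr.
rewrite big_ord_recl blk_ord0 scaler0; under eq_bigr do rewrite blk_lift.
by rewrite [LHS]add0r.
Qed.

Lemma Code_block_mem c r : Code_block c r \in <<B>>%VS.
Proof. by rewrite Code_blockE; apply: memv_suml => j _; rewrite memvZ ?memv_span ?mem_tnth. Qed.

Lemma Code_block_eq0 c r : Code_block c r = 0 -> forall m, m != r -> c m = 0.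
Proof.
rewrite Code_blockE => block0 m m_neq_r.
have coef0 := freeP freeB (fun j => c (r - lift ord0 j)).
have /coef0 {}coef0 : \sum_(j < k) c (r - lift ord0 j) *: B`_j = 0.
  by rewrite -[RHS]block0; apply: eq_bigr => j _; rewrite (tnth_nth 0).
case: (unliftP ord0 (r - m)) => [j rj | /eqP].
  by rewrite -(subKr r m) rj coef0.
by rewrite -[ord0]/(0 : 'I_k.+1) subr_eq0 eq_sym (negbTE m_neq_r).
Qed.

Lemma Code_block_neq0 c m r : c m != 0 -> r != m -> Code_block c r != 0.
Proof.
by move=> cm_neq0 r_neq_m; apply: contraNneq cm_neq0 => /Code_block_eq0 -> //; rewrite eq_sym.
Qed.

Lemma Code_comb_single c r : Code_block c r = 0 ->
  \sum_m c m *: basis_vec B m = c r *: basis_vec B r.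
Proof.
move=> block0; rewrite (bigD1 r) //= big1 ?addr0 // => m m_neq_r.
by rewrite (Code_block_eq0 block0 m_neq_r) scale0r.
Qed.

Section Nondegenerate.
Hypothesis k_gt0 : (0 < k)%N.

Lemma Code_comb_eq0 c : \sum_m c m *: basis_vec B m = 0 -> forall m, c m = 0.
Proof.
rewrite Code_combE => comb0 m.
apply: (Code_block_eq0 (col_blocks_eq0 (if m == ord0 then ord_max else ord0) comb0)).
by case: (eqVneq m ord0) => [->|//]; rewrite -val_eqE /= eq_sym -lt0n.
Qed.

Lemma free_Basis : free (Basis B).
Proof.
apply/freeP => c comb0; apply: Code_comb_eq0.
by rewrite -[RHS]comb0; apply: eq_bigr => m _; rewrite nth_Basis.
Qed.

Lemma basis_of_Code : basis_of (Code B) (Basis B).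
Proof. by rewrite /basis_of /Code eqxx free_Basis. Qed.

Lemma dim_Code : \dim (Code B) = k.+1.
Proof. by move/eqP: free_Basis; rewrite size_tuple. Qed.

End Nondegenerate.

Lemma basis_vec_Code m : basis_vec B m \in Code B.
Proof. by rewrite memv_span // -nth_Basis mem_nth ?size_tuple. Qed.

Lemma Code_coord x : x \in Code B -> x = \sum_m coord (Basis B) m x *: basis_vec B m.
Proof. by move/coord_span => {1}->; apply: eq_bigr => m _; rewrite nth_Basis. Qed.

Lemma Code_coord_neq0 x : x \in Code B -> x != 0 -> exists m, coord (Basis B) m x != 0.
Proof.
move=> xC x_neq0; apply/existsP; apply: contraNT x_neq0 => /existsPn coord0; apply/eqP.
by rewrite (Code_coord xC) big1 // => m _; rewrite (eqP (negbNE (coord0 m))) scale0r.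
Qed.

Lemma wt_basis_vec u m : (forall j, wt (tnth B j) = u) -> wt (basis_vec B m) = (k * u)%N.
Proof.
move=> wtB; rewrite basis_vecE wt_col_blocks.
rewrite (reindex_inj (addIr m)); under eq_bigr do rewrite addrK.
rewrite big_ord_recl blk_ord0 wt0; under eq_bigr do rewrite blk_lift wtB.
by rewrite [LHS]add0n sum_nat_const card_ord.
Qed.

Lemma wt_sum_basis_vec : wt (\sum_m basis_vec B m) = (k.+1 * wt (\sum_j tnth B j))%N.
Proof.
under eq_bigr do rewrite -[basis_vec _ _]scale1r.
rewrite Code_combE wt_col_blocks.
under eq_bigr do rewrite Code_blockE; under eq_bigr do under eq_bigr do rewrite scale1r.
by rewrite sum_nat_const card_ord.
Qed.

Section LowerBound.
Variable d : nat.
Hypothesis wt_span_ge : forall x, x \in <<B>>%VS -> x != 0 -> (d <= wt x)%N.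

(* If c m != 0, every block other than block m is a nonzero vector of <<B>>. *)
Lemma wt_Code_comb_ge c m : c m != 0 -> (k * d <= wt (\sum_m c m *: basis_vec B m))%N.
Proof.
move=> cm_neq0; rewrite Code_combE wt_col_blocks (bigD1 m) //=.
apply: leq_trans (leq_addl _ _).
have -> : (k * d = \sum_(r | r != m) d)%N.
  by rewrite sum_nat_cond_const (eq_card (B := predC1 m)) ?cardC1 ?card_ord // => r; rewrite inE.
apply: leq_sum => r r_neq_m.
by rewrite wt_span_ge ?Code_block_mem ?(Code_block_neq0 cm_neq0).
Qed.

Lemma wt_Code_ge x : x \in Code B -> x != 0 -> (k * d <= wt x)%N.
Proof.
move=> xC x_neq0; have [m cm_neq0] := Code_coord_neq0 xC x_neq0.
by rewrite (Code_coord xC); apply: wt_Code_comb_ge cm_neq0.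
Qed.

Section Bounded.
Variable u : nat.
Hypotheses (wtB : forall j, wt (tnth B j) = u) (bound : (k.+1 * d <= k * u)%N).

(* A codeword with a zero block is a multiple of some a'_r, of weight k u. *)
Lemma wt_Code_ge_bounded x : x \in Code B -> x != 0 -> (k.+1 * d <= wt x)%N.
Proof.
move=> xC; rewrite (Code_coord xC); set c := fun m => coord (Basis B) m x.
case: (boolP [exists r, Code_block c r == 0])
  => [/existsP[r /eqP block0] | /existsPn blocks_neq0].
  rewrite (Code_comb_single block0) => x_neq0.
  have cr_neq0 : c r != 0 by apply: contraNneq x_neq0 => ->; rewrite scale0r.
  by rewrite wtZ // (wt_basis_vec _ wtB).
move=> _; rewrite Code_combE wt_col_blocks.
have -> : (k.+1 * d = \sum_(r < k.+1) d)%N by rewrite sum_nat_const card_ord.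
by apply: leq_sum => r _; rewrite wt_span_ge ?Code_block_mem ?blocks_neq0.
Qed.

Lemma min_dist_Code : (0 < k)%N -> wt (\sum_j tnth B j) = d -> is_min_dist (Code B) (k.+1 * d).
Proof.
move=> k_gt0 wt_sum; split; last exact: wt_Code_ge_bounded.
exists (\sum_m basis_vec B m); first by apply: memv_suml => m _; apply: basis_vec_Code.
split; last by rewrite wt_sum_basis_vec wt_sum.
apply/eqP => sum0.
have comb0 : \sum_m (fun=> 1 : F) m *: basis_vec B m = 0.
  by rewrite -[RHS]sum0; apply: eq_bigr => m _; rewrite scale1r.
by move: (Code_comb_eq0 k_gt0 comb0 ord0); apply/eqP; rewrite oner_neq0.
Qed.

End Bounded.
End LowerBound.
End Code.

Theorem proposition3p3 (F : fieldType) (n k d : nat)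
    (C : {vspace 'cV[F]_n}) (B : k.-tuple 'cV[F]_n) :
  basis_of C B -> is_code C k d ->
  (basis_of (Code B) (Basis B) /\
   exists d', is_code (Code B) k.+1 d' /\ (k * d <= d')%N) /\
  (forall u : nat, u_bounded C B u ->
     is_min_dist (Code B) (k.+1 * d) /\
     (u_bounded (Code B) (Basis B) (k * u) <->
      (d%:R * (1 + 2 * (k%:R)^-1) <= (u%:R : rat)))).
Proof.
move=> bCB [dimC mdC].
have k_gt0 : (0 < k)%N by rewrite -dimC (min_dist_dim_gt0 mdC).
have freeB := basis_free bCB.
have wt_span_ge : forall x, x \in <<B>>%VS -> x != 0 -> (d <= wt x)%N.
  by rewrite (span_basis bCB); case: mdC.
have bCode := basis_of_Code freeB k_gt0; have dimCode := dim_Code freeB k_gt0.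
split.
  split=> //; have [d' md'] : exists d', is_min_dist (Code B) d'.
    by apply: min_dist_exists; rewrite dimCode.
  exists d'; split=> //; case: md' => -[x xC [x_neq0 <-]] _.
  exact: wt_Code_ge wt_span_ge x xC x_neq0.
move=> u [u_gt0 _ [_ [/(min_dist_unique mdC) <- wtB wt_sum]]].
rewrite ler_natMinv // addn1 mulnC [(u * k)%N]mulnC => bound.
have mdCode := min_dist_Code freeB wt_span_ge wtB bound k_gt0 wt_sum.
split=> //; rewrite ler_natMinvD // -(ler_natMinvS rat _ _ k_gt0); split.
  by case=> _ _ [d' [md' _ _]]; rewrite (min_dist_unique md' mdCode).
move=> Code_bound; split; rewrite ?muln_gt0 ?k_gt0 //; exists (k.+1 * d)%N; split=> //.
- by move=> m; rewrite tnth_mktuple (wt_basis_vec _ wtB).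
- by under eq_bigr do rewrite tnth_mktuple; rewrite wt_sum_basis_vec wt_sum.
Qed.
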